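(* Let $q$ be a prime power, $\mathbb{L}=\mathrm{GF}(q^m)$, $n\mid q^m-1$, and $F_n=\{f\in\mathbb{L}^n : f_{qi\bmod n}=f_i^q\ \forall i\in\mathbb{Z}/n\mathbb{Z}\}$. For $g\in\mathbb{L}^n$ and each $q$-cyclotomic class $C=\{c,qc,\ldots,q^{|C|-1}c\}$ modulo $n$ (with chosen leader $c$), put $x_{C,t}=(g_{q^tc})^{q^{m-t}}$ for $t=0,\ldots,|C|-1$. Then $$\min_{f\in F_n}|\mathrm{supp}(g-f)|=\sum_{C}\Big(|C|-\max_{b\in\mathrm{GF}(q^{|C|})}\#\{t : x_{C,t}=b\}\Big),$$ the sum running over all $q$-cyclotomic classes modulo $n$.
   Context: $\mathrm{supp}(h)=\{i : h_i\neq0\}$. The $q$-cyclotomic class of $s\in\mathbb{Z}/n\mathbb{Z}$ is $\{s,qs,q^2s,\ldots\}\bmod n$. $\mathrm{GF}(q^\ell)$ for $\ell\mid m$ is the unique subfield of $\mathbb{L}$ of that size. *)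

From mathcomp Require Import all_boot all_order all_algebra all_field.
Set Implicit Arguments. Unset Strict Implicit. Unset Printing Implicit Defensive.
Import GRing.Theory.
Local Open Scope ring_scope.

(* The index k mod n, as an element of 'I_n (n > 0 is witnessed by i : 'I_n). *)
Definition ord_mod (n : nat) (i : 'I_n) (k : nat) : 'I_n :=
  Ordinal (@ltn_pmod k n (leq_ltn_trans (leq0n i) (ltn_ord i))).

Definition prime_power (q : nat) : Prop :=
  exists p k : nat, prime p /\ (0 < k)%N /\ q = (p ^ k)%N.

Definition supp (L : fieldType) (n : nat) (h : 'I_n -> L) : {set 'I_n} :=
  [set i | h i != 0].

Definition Fn (L : fieldType) (q n : nat) (f : 'I_n -> L) : Prop :=
  forall i : 'I_n, f (ord_mod i (q * i)) = f i ^+ q.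

(* q-cyclotomic class of c modulo n: { q^t c mod n : t >= 0 }.
   Ranging t over 'I_n suffices: the sequence q^t c mod n takes all its
   values among its first n terms. *)
Definition cyc_class (q n : nat) (c : 'I_n) : {set 'I_n} :=
  [set ord_mod c (q ^ t * c) | t : 'I_n].

Definition cyc_classes (q n : nat) : {set {set 'I_n}} :=
  [set cyc_class q c | c : 'I_n].

Definition xCt (L : fieldType) (q m n : nat) (g : 'I_n -> L) (c : 'I_n) (t : nat) : L :=
  g (ord_mod c (q ^ t * c)) ^+ (q ^ (m - t)).

(* GF(q^l) as the subfield {b : b^(q^l) = b} of L *)
Definition in_GF (L : fieldType) (q l : nat) (b : L) : bool := b ^+ (q ^ l) == b.

Definition class_term (L : finFieldType) (q m n : nat) (g : 'I_n -> L)
  (C : {set 'I_n}) (c : 'I_n) : nat :=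
  (#|C| - \max_(b : L | in_GF q #|C| b) #|[set t : 'I_#|C| | xCt q m g c t == b]|)%N.

From mathcomp Require Import all_boot all_order all_algebra all_field.
Set Implicit Arguments. Unset Strict Implicit. Unset Printing Implicit Defensive.
Import GRing.Theory.

(* Since q^m = 1 mod n, multiplication by q permutes Z/nZ, and its orbits are
   the q-cyclotomic classes; so |supp (g - f)| splits as a sum over classes and
   the classes can be treated independently.  On a class C with leader c, an
   f in F_n is determined by b = f_c, which lies in GF(q^|C|), through
   f_{q^t c} = b^{q^t}.  As x |-> x^{q^(m-t)} inverts x |-> x^{q^t} on L, f and
   g agree at q^t c exactly when x_{C,t} = b.  Hence f misses g on C at
   |C| - #{t | x_{C,t} = b} places, and choosing on every class a b that
   maximises #{t | x_{C,t} = b} attains the minimum. *)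

Lemma iter_modn (T : Type) (f : T -> T) (p t : nat) (x : T) :
  iter p f x = x -> iter t f x = iter (t %% p) f x.
Proof.
move=> fpx; rewrite {1}(divn_eq t p) addnC iterD; congr (iter _ f _).
by elim: (t %/ p) => // k IHk; rewrite mulSn iterD IHk.
Qed.

Lemma iter_morph (A B : Type) (f : A -> B) (s : A -> A) (h : B -> B) (t : nat) :
  {morph f : x / s x >-> h x} -> {morph f : x / iter t s x >-> iter t h x}.
Proof. by move=> fM x; elim: t => //= t <-. Qed.

Section Orbits.

Variables (T : finType) (s : T -> T).

Definition orbit_set (x : T) : {set T} := [set y | fconnect s x y].

Definition orbit_sets : {set {set T}} := [set orbit_set x | x : T].

Lemma card_orbit_set x : #|orbit_set x| = order s x.
Proof. by rewrite cardsE. Qed.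

Lemma order_le_period p x : 0 < p -> iter p s x = x -> order s x <= p.
Proof.
move=> p_gt0 spx; rewrite -card_orbit_set.
have sub : orbit_set x \subset [set iter t s x | t : 'I_p].
  apply/subsetP => y; rewrite inE => /iter_findex <-; apply/imsetP.
  by exists (Ordinal (ltn_pmod (findex s x y) p_gt0)); rewrite // -(iter_modn _ spx).
by rewrite (leq_trans (subset_leq_card sub)) // -[p in _ <= p]card_ord leq_imset_card.
Qed.

Lemma card_orbit_set_pred x k (P : pred T) : k = order s x ->
  #|[set y in orbit_set x | P y]| = #|[set t : 'I_k | P (iter t s x)]|.
Proof.
move=> kE; have iter_inj : injective (fun t : 'I_k => iter t s x).
  by move=> t1 t2 /(congr1 (findex s x)); rewrite !findex_iter -?kE //; apply: val_inj.
rewrite -(card_imset _ iter_inj); apply: eq_card => y; apply/idP/imsetP.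
  rewrite !inE => /andP [xy Py].
  have lt_yk : findex s x y < k by rewrite kE findex_max.
  by exists (Ordinal lt_yk); rewrite ?inE /= iter_findex.
by case=> t; rewrite !inE => Pt ->; rewrite fconnect_iter.
Qed.

Hypothesis s_inj : injective s.

Lemma mem_orbit_sets C y : C \in orbit_sets -> (y \in C) = (orbit_set y == C).
Proof.
case/imsetP => x _ ->; apply/idP/eqP => [| <-]; last by rewrite inE connect0.
rewrite inE (fconnect_sym s_inj) => yx; apply/setP => z; rewrite !inE.
exact: (same_connect (fconnect_sym s_inj) yx z).
Qed.

Lemma card_sum_orbit_sets (P : pred T) :
  #|[set y | P y]| = \sum_(C in orbit_sets) #|[set y in C | P y]|.
Proof.
rewrite -sum1_card (partition_big orbit_set (mem orbit_sets)) /=; last first.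
  by move=> y _; apply: imset_f.
apply: eq_bigr => C C_orb; rewrite -sum1_card; apply: eq_bigl => y.
by rewrite !inE (mem_orbit_sets _ C_orb) andbC.
Qed.

Section Extension.

Variables (U : Type) (h : U -> U) (rep : {set T} -> T) (u : {set T} -> U).
Hypothesis rep_mem : forall C, C \in orbit_sets -> rep C \in C.
Hypothesis u_period : forall C, C \in orbit_sets -> iter #|C| h (u C) = u C.

Definition orbit_extension (y : T) : U :=
  iter (findex s (rep (orbit_set y)) y) h (u (orbit_set y)).

Lemma orbit_extension_iter C t :
  C \in orbit_sets -> orbit_extension (iter t s (rep C)) = iter t h (u C).
Proof.
move=> C_orb; have /eqP C_rep : orbit_set (rep C) == C.
  by rewrite -mem_orbit_sets ?rep_mem.
set c := rep C in C_rep *.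
rewrite /orbit_extension; have /eqP -> : orbit_set (iter t s c) == C.
  by rewrite -mem_orbit_sets // -C_rep inE fconnect_iter.
rewrite (iter_modn _ (iter_order s_inj c)) findex_iter ?ltn_pmod //.
by rewrite [RHS](iter_modn _ (u_period C_orb)) -C_rep card_orbit_set.
Qed.

Lemma orbit_extension_morph : {morph orbit_extension : y / s y >-> h y}.
Proof.
move=> y; have C_orb : orbit_set y \in orbit_sets by apply: imset_f.
have /iter_findex <- : fconnect s (rep (orbit_set y)) y.
  by rewrite -(fconnect_sym s_inj) -inE rep_mem.
by rewrite -iterS !orbit_extension_iter.
Qed.

End Extension.

End Orbits.

Section CyclotomicClasses.

Variables q n : nat.

Definition mulq (i : 'I_n) : 'I_n := ord_mod i (q * i).

Lemma iter_mulq c t : iter t mulq c = ord_mod c (q ^ t * c).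
Proof.
apply: val_inj => /=; elim: t => [|t IHt] /=; first by rewrite mul1n modn_small.
by rewrite IHt modnMmr expnS mulnA.
Qed.

Lemma cyc_classE c : cyc_class q c = orbit_set mulq c.
Proof.
apply/setP => y; rewrite inE; apply/imsetP/idP => [[t _ ->] | cy].
  by rewrite -iter_mulq fconnect_iter.
have lt_yn : findex mulq c y < n.
  rewrite (leq_trans (findex_max cy)) // -card_orbit_set.
  by rewrite (leq_trans (max_card _)) ?card_ord.
by exists (Ordinal lt_yn); rewrite // -iter_mulq iter_findex.
Qed.

Lemma cyc_classesE : cyc_classes q n = orbit_sets mulq.
Proof. by apply: eq_imset => c; rewrite cyc_classE. Qed.

Variable m : nat.
Hypotheses (m_gt0 : 0 < m) (qm_gt0 : 0 < q ^ m) (n_dvd : n %| q ^ m - 1).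

Lemma iter_mulq_period c : iter m mulq c = c.
Proof.
have qm_mod : q ^ m = 1 %[mod n] by rewrite -(subnK qm_gt0) -modnDml (eqP n_dvd).
by apply: val_inj; rewrite iter_mulq /= -modnMml qm_mod modnMml mul1n modn_small.
Qed.

Lemma mulq_inj : injective mulq.
Proof.
apply: (can_inj (g := iter m.-1 mulq)) => c.
by rewrite -iterSr prednK // iter_mulq_period.
Qed.

Lemma order_mulq_le c : order mulq c <= m.
Proof. exact: order_le_period m_gt0 (iter_mulq_period c). Qed.

End CyclotomicClasses.

Local Open Scope ring_scope.

Lemma iter_exprn (R : pzSemiRingType) (x : R) (q t : nat) :
  iter t (fun y => y ^+ q) x = x ^+ (q ^ t).
Proof. by elim: t => [|t IHt]; rewrite ?expr1 //= IHt -exprM -expnSr. Qed.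

Lemma eq_expr_frobenius (R : pzSemiRingType) (q m t : nat) (x b : R) :
  (forall y : R, y ^+ (q ^ m) = y) -> (t <= m)%N ->
  (x ^+ (q ^ (m - t)) == b) = (x == b ^+ (q ^ t)).
Proof.
move=> frob le_tm; apply/eqP/eqP => [<- | ->].
  by rewrite -exprM -expnD subnK.
by rewrite -exprM -expnD subnKC.
Qed.

Lemma in_GF_iter (F : fieldType) (q k : nat) (b : F) :
  in_GF q k b = (iter k (fun x => x ^+ q) b == b).
Proof. by rewrite iter_exprn. Qed.

Section MinimumDistance.

Variables (L : finFieldType) (q m n : nat).
Hypotheses (m_gt0 : (0 < m)%N) (cardL : #|L| = (q ^ m)%N).
Hypothesis n_dvd : (n %| q ^ m - 1)%N.
Variables (leader : {set 'I_n} -> 'I_n) (g : 'I_n -> L).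
Hypothesis leader_mem : forall C, C \in cyc_classes q n -> leader C \in C.

Local Notation s := (@mulq q n).

Lemma frobenius_id (x : L) : x ^+ (q ^ m) = x.
Proof. by rewrite -cardL expf_card. Qed.

Lemma qm_gt0 : (0 < q ^ m)%N.
Proof. by rewrite -cardL; apply/card_gt0P; exists 0. Qed.

Lemma mulq_injective : injective s.
Proof. exact: mulq_inj m_gt0 qm_gt0 n_dvd. Qed.

Lemma orbit_set_leader C : C \in cyc_classes q n -> orbit_set s (leader C) = C.
Proof.
move=> C_cls; apply/eqP.
by rewrite -(mem_orbit_sets mulq_injective) ?leader_mem // -cyc_classesE.
Qed.

Lemma card_supp_classes (f : 'I_n -> L) :
  #|supp (fun i => g i - f i)| =
    (\sum_(C in cyc_classes q n) #|[set y in C | g y != f y]|)%N.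
Proof.
rewrite cyc_classesE -(card_sum_orbit_sets mulq_injective).
by apply: eq_card => i; rewrite !inE subr_eq0.
Qed.

Lemma card_class_mismatch C (f : 'I_n -> L) b :
  C \in cyc_classes q n -> (forall t, f (iter t s (leader C)) = b ^+ (q ^ t)) ->
  #|[set y in C | g y != f y]| =
    (#|C| - #|[set t : 'I_#|C| | xCt q m g (leader C) t == b]|)%N.
Proof.
move=> /orbit_set_leader C_rep; set c := leader C in C_rep * => fE.
have kC : #|C| = order s c by rewrite -C_rep card_orbit_set.
rewrite -[in LHS]C_rep (card_orbit_set_pred _ kC).
rewrite cardsCs card_ord; congr (_ - _)%N; apply: eq_card => t.
have le_tm : (t <= m)%N.
  rewrite ltnW // (leq_trans (ltn_ord t)) // kC.
  exact: order_mulq_le m_gt0 qm_gt0 n_dvd c.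
by rewrite !inE negbK fE /xCt -iter_mulq (eq_expr_frobenius _ _ frobenius_id le_tm).
Qed.

Lemma Fn_iter (f : 'I_n -> L) t c : Fn q f -> f (iter t s c) = f c ^+ (q ^ t).
Proof. by move=> Fn_f; rewrite (iter_morph (h := fun x => x ^+ q) t Fn_f) iter_exprn. Qed.

Lemma class_term_le_Fn C (f : 'I_n -> L) : C \in cyc_classes q n -> Fn q f ->
  (class_term q m g C (leader C) <= #|[set y in C | g y != f y]|)%N.
Proof.
move=> C_cls Fn_f; have /orbit_set_leader C_rep := C_cls.
rewrite (card_class_mismatch C_cls (fun t => Fn_iter t (leader C) Fn_f)) leq_sub2l //.
rewrite (leq_bigmax_cond (f (leader C))) //; set c := leader C in C_rep *.
by rewrite /in_GF -Fn_iter // -C_rep card_orbit_set (iter_order mulq_injective).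
Qed.

Lemma exists_Fn_attaining_class_terms :
  exists2 f : 'I_n -> L, Fn q f & forall C, C \in cyc_classes q n ->
    #|[set y in C | g y != f y]| = class_term q m g C (leader C).
Proof.
pose hits (C : {set 'I_n}) (b : L) :=
  #|[set t : 'I_#|C| | xCt q m g (leader C) t == b]|.
pose best (C : {set 'I_n}) : L := [arg max_(b > 1 | in_GF q #|C| b) hits C b].
have GF1 (C : {set 'I_n}) : in_GF q #|C| (1 : L) by rewrite /in_GF expr1n.
have best_max (C : {set 'I_n}) :
    (\max_(b | in_GF q #|C| b) hits C b)%N = hits C (best C).
  rewrite /best; case: (arg_maxnP _ (GF1 C)) => b b_GF b_max.
  by apply/eqP; rewrite eqn_leq (leq_bigmax_cond b b_GF) andbT; apply/bigmax_leqP.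
have best_period (C : {set 'I_n}) :
    C \in orbit_sets s -> iter #|C| (fun x => x ^+ q) (best C) = best C.
  by move=> _; apply/eqP; rewrite -in_GF_iter /best; case: (arg_maxnP _ (GF1 C)).
have leader_orb (C : {set 'I_n}) : C \in orbit_sets s -> leader C \in C.
  by rewrite -cyc_classesE; apply: leader_mem.
exists (orbit_extension s (fun x => x ^+ q) leader best).
  exact: (orbit_extension_morph mulq_injective leader_orb best_period).
move=> C C_cls; rewrite /class_term best_max; apply: card_class_mismatch => // t.
rewrite (orbit_extension_iter mulq_injective leader_orb best_period) ?iter_exprn //.
by rewrite -cyc_classesE.
Qed.

End MinimumDistance.

Unset Implicit Arguments.

Theorem theorem9p4 (L : finFieldType) (q m n : nat)
  (hq : prime_power q) (hm : (0 < m)%N) (hL : #|L| = (q ^ m)%N)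
  (hn : (n %| q ^ m - 1)%N)
  (leader : {set 'I_n} -> 'I_n)
  (hleader : forall C, C \in cyc_classes q n -> leader C \in C)
  (g : 'I_n -> L) :
  let S := (\sum_(C in cyc_classes q n) class_term q m g C (leader C))%N in
  (exists f : 'I_n -> L, Fn q f /\ #|supp (fun i => (g i - f i)%R)| = S) /\
  (forall f : 'I_n -> L, Fn q f -> (S <= #|supp (fun i => (g i - f i)%R)|)%N).
Proof.
move=> S; split.
  have [f Fn_f f_classes] := exists_Fn_attaining_class_terms hm hL hn g hleader.
  by exists f; split; rewrite // (card_supp_classes hm hL hn); apply: eq_bigr.
move=> f Fn_f; rewrite (card_supp_classes hm hL hn); apply: leq_sum => C C_cls.
exact: class_term_le_Fn.
Qed.
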